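(* Let $n\ge 1$ and $Dic_{4n}=\langle a,x\mid a^{2n}=1,\ x^2=a^n,\ x^{-1}ax=a^{-1}\rangle$ be the dicyclic group of order $4n$. Then: \begin{enumerate} \item If $n\neq 2$, then $\mathcal{CD}(Dic_{4n})$ is a chain of length $0$; namely $\mathcal{CD}(Dic_{4n})=\{Dic_{4n}\}$ for $n=1$, and $\mathcal{CD}(Dic_{4n})=\{\langle a\rangle\}$ for $n\ge 3$. \item If $n=2$, then $\mathcal{CD}(Dic_{4n})$ is a quasi-antichain of width $3$, namely the set of all subgroups $H$ with $Z(Dic_{4n})\le H\le Dic_{4n}$. \end{enumerate}
   Context: For a finite group $G$ and $H\le G$, $m_G(H)=|H|\,|C_G(H)|$, $m^*(G)=\max\{m_G(H)\mid H\le G\}$, and the Chermak-Delgado lattice is $\mathcal{CD}(G)=\{H\le G\mid m_G(H)=m^*(G)\}$. A chain of length $0$ is a one-element lattice. A lattice is a quasi-antichain of width $w$ if it consists of a least element, a greatest element, and $w$ further pairwise incomparable elements. *)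

From mathcomp Require Import all_boot all_order all_fingroup all_solvable.
Set Implicit Arguments. Unset Strict Implicit. Unset Printing Implicit Defensive.
Local Open Scope group_scope.

Section CD.
Variable gT : finGroupType.

Definition mCD (G H : {group gT}) : nat := #|H| * #|'C_G(H)|.

Definition mstar (G : {group gT}) : nat :=
  \max_(H : {group gT} | H \subset G) mCD G H.

Definition CDlattice (G : {group gT}) : {set {group gT}} :=
  [set H : {group gT} | (H \subset G) && (mCD G H == mstar G)].

Definition chain0 (L : {set {group gT}}) : Prop := #|L| = 1%N.

Definition quasi_antichain (L : {set {group gT}}) (w : nat) : Prop :=
  exists bot top : {group gT},
    [/\ bot \in L, top \in L & bot != top] /\
    [/\
        {in L, forall H : {group gT}, bot \subset H /\ H \subset top},
        #|L :\: [set bot; top]| = w &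
        {in L :\: [set bot; top] &, forall H K : {group gT}, H \subset K -> H = K}].
End CD.

(* Write A = <a>, a subgroup of index 2. Every y outside A inverts A and
   satisfies y^2 = a^n, so a subgroup of A centralised by such a y has
   exponent 2, hence order at most 2. For n >= 2 this gives C_G(A) = A and
   Z(G) = <a^n>, and it bounds m_G(H) by 8n unless H <= A, where
   m_G(H) <= 2n|H|; thus m*(G) = 4n^2 = m_G(A), and A is the only subgroup
   attaining it once 4n^2 > 8n. For n = 1 the group is cyclic. For n = 2
   (the quaternion group) every member of CD(G) contains Z(G), every H with
   Z(G) <= H <= G has m_G(H) = 16, and the middle members are the three
   cyclic subgroups <a>, <x>, <ax> of order 4. *)

From mathcomp Require Import all_boot all_order all_fingroup all_solvable.
From mathcomp Require Import zify.
Set Implicit Arguments. Unset Strict Implicit. Unset Printing Implicit Defensive.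
Local Open Scope group_scope.

Section GroupFacts.
Variable gT : finGroupType.
Implicit Types G H K : {group gT}.

Lemma leq_index_sub G H K : K \subset G -> (#|K : H| <= #|G : H|)%N.
Proof. by move=> sKG; apply/subset_leq_card/imsetS. Qed.

Lemma leq_card_indexI G H K : K \subset G -> (#|K| <= #|G : H| * #|K :&: H|)%N.
Proof.
move=> sKG; rewrite -(Lagrange (subsetIl K H)) indexgI mulnC.
by rewrite leq_mul2r leq_index_sub ?orbT.
Qed.

Lemma double_card_proper G H : H \proper G -> (2 * #|H| <= #|G|)%N.
Proof.
case/andP=> sHG nsGH; rewrite -(Lagrange sHG) mulnC leq_mul2l.
by rewrite indexg_gt1 nsGH orbT.
Qed.

End GroupFacts.

Section ChermakDelgado.
Variable gT : finGroupType.
Implicit Types G H K : {group gT}.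

Lemma leq_mCD_mstar G H : H \subset G -> (mCD G H <= mstar G)%N.
Proof. by move=> sHG; apply: (leq_bigmax_cond H). Qed.

Lemma mstar_attained G H m : H \subset G -> mCD G H = m ->
  (forall K, K \subset G -> mCD G K <= m)%N -> mstar G = m.
Proof.
move=> sHG <- le_m; apply/eqP; rewrite eqn_leq leq_mCD_mstar // andbT.
exact/bigmax_leqP.
Qed.

Lemma CDlattice_abelian G : abelian G -> CDlattice G = [set G].
Proof.
move=> abG; have mCD_ab H : H \subset G -> mCD G H = (#|H| * #|G|)%N.
  by move=> sHG; rewrite /mCD (setIidPl _) // centsC (subset_trans sHG abG).
have mstarG : mstar G = (#|G| * #|G|)%N.
  apply: (mstar_attained (subxx G)); first exact: mCD_ab.
  by move=> K sKG; rewrite mCD_ab // leq_mul2r subset_leq_card ?orbT.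
apply/setP=> H; rewrite !inE mstarG.
apply/andP/eqP=> [[sHG] | ->]; last by rewrite subxx mCD_ab.
rewrite mCD_ab // eqn_mul2r gtn_eqF ?cardG_gt0 //= => /eqP eq_card.
by apply/val_inj/eqP; rewrite eqEcard sHG eq_card /=.
Qed.

(* Adjoining Z(G) enlarges H without shrinking its centraliser. *)
Lemma center_sub_CDlattice G H : H \in CDlattice G -> 'Z(G) \subset H.
Proof.
rewrite inE => /andP[sHG /eqP mH]; apply/negPn/negP => nsZH.
set K := (H <*> 'Z(G))%G.
have sKG : K \subset G by rewrite join_subG sHG center_sub.
have ltHK : (#|H| < #|K|)%N.
  rewrite proper_card // properEneq joing_subl andbT.
  by apply: contraNneq nsZH => ->; apply: joing_subr.
have sCHK : 'C_G(H) \subset 'C_G(K).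
  rewrite centY setIA subsetI subxx (subset_trans (subsetIl _ _)) //.
  by rewrite centsC subsetIr.
have : (mCD G H < mCD G K)%N.
  apply: leq_trans (leq_mul (leqnn _) (subset_leq_card sCHK)).
  by rewrite ltn_pmul2r ?cardG_gt0.
by rewrite mH ltnNge leq_mCD_mstar.
Qed.

Lemma quasi_antichain_interval (L : {set {group gT}}) (B T : {group gT}) :
    L = [set H : {group gT} | (B \subset H) && (H \subset T)] -> B \proper T ->
    {in L :\: [set B; T] &, forall H K, #|H| = #|K|} ->
  quasi_antichain L #|L :\: [set B; T]|.
Proof.
move=> defL ltBT eq_card; have sBT := proper_sub ltBT.
exists B, T; split; split=> //.
- by rewrite defL inE subxx sBT.
- by rewrite defL inE subxx sBT.
- by apply: contraTneq ltBT => ->; rewrite properxx.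
- by move=> H; rewrite defL inE => /andP[].
move=> H K LH LK sHK; apply/val_inj/eqP.
by rewrite eqEcard sHK (eq_card H K) /=.
Qed.

End ChermakDelgado.

Section Dicyclic.
Variables (gT : finGroupType) (G : {group gT}) (a x : gT) (n : nat).
Hypotheses (n_gt0 : (0 < n)%N) (defG : G :=: <<[set a; x]>>)
  (a2n : a ^+ (2 * n)%N = 1) (x2 : x ^+ 2 = a ^+ n) (ax : a ^ x = a^-1)
  (cardG : #|G| = (4 * n)%N).

Local Notation A := <[a]>%G.
Implicit Types H K : {group gT}.

Lemma aG : a \in G. Proof. by rewrite defG mem_gen // !inE eqxx. Qed.
Lemma xG : x \in G. Proof. by rewrite defG mem_gen // !inE eqxx orbT. Qed.
Lemma sAG : A \subset G. Proof. by rewrite cycle_subG aG. Qed.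

Lemma conj_A_x z : z \in A -> z ^ x = z^-1.
Proof. by case/cycleP=> i ->; rewrite conjXg ax expgVn. Qed.

Lemma commute_A y z : y \in A -> z \in A -> commute y z.
Proof. by move=> /cycleP[i ->] /cycleP[j ->]; apply: commuteX2. Qed.

Lemma sub_G_cosets : G \subset A :|: A :* x.
Proof.
have nAx : x \in 'N(A) by rewrite inE -cycleJ ax cycleV.
have sGAX : G \subset A * <[x]>.
  rewrite -norm_joinEr ?cycle_subG // defG gen_subG subUset !sub1set.
  by rewrite !(subsetP _ _ (cycle_id _)) ?joing_subl ?joing_subr.
apply: subset_trans sGAX _; apply/subsetP=> _ /mulsgP[u _ Au /cycleP[k ->] ->].
rewrite (divn_eq k 2) expgD mulnC expgM x2 -expgM mulgA inE mem_rcoset.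
have uA : u * a ^+ (n * (k %/ 2)) \in A by rewrite groupM ?mem_cycle.
have := ltn_mod k 2; case: (k %% 2) => [|[|//]] _;
  by rewrite ?mulg1 ?mulgK uA ?orbT.
Qed.

Lemma order_a : #[a] = (2 * n)%N.
Proof.
have le_G : (4 * n <= 2 * #[a])%N.
  rewrite -cardG (leq_trans (subset_leq_card sub_G_cosets)) //.
  by rewrite cardsU card_rcoset -orderE; lia.
have le_2n : (#[a] <= 2 * n)%N by rewrite dvdn_leq ?muln_gt0 // order_dvdn a2n.
lia.
Qed.

Lemma card_A : #|A| = (2 * n)%N.
Proof. by rewrite -orderE order_a. Qed.

Lemma index_A : #|G : A| = 2.
Proof.
by rewrite -divgS ?sAG // cardG card_A -[4%N]/(2 * 2)%N -mulnA mulnK ?muln_gt0.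
Qed.

Lemma x_notin_A : x \notin A.
Proof.
apply: contraL (subset_leq_card sub_G_cosets) => Ax.
by rewrite rcoset_id // setUid cardG card_A -ltnNge; lia.
Qed.

Lemma axG : a * x \in G. Proof. by rewrite groupM ?aG ?xG. Qed.

Lemma ax_notin_A : a * x \notin A.
Proof.
by apply: contra x_notin_A => Aax; rewrite -(mulKg a x) groupM ?groupV ?cycle_id.
Qed.

Lemma rcoset_outside_A y : y \in G -> y \notin A -> y \in A :* x.
Proof. by move=> /(subsetP sub_G_cosets); rewrite inE => /orP[->|]. Qed.

Lemma conj_outside_A z y : z \in A -> y \in G -> y \notin A -> z ^ y = z^-1.
Proof.
move=> Az yG nAy; case/rcosetP: (rcoset_outside_A yG nAy) => u Au ->.
have /conjg_fixP fix_zu : [~ z, u] == 1 by apply/commgP/commute_A.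
by rewrite conjgM fix_zu conj_A_x.
Qed.

Lemma sqr_outside_A y : y \in G -> y \notin A -> y ^+ 2 = a ^+ n.
Proof.
move=> yG nAy; case/rcosetP: (rcoset_outside_A yG nAy) => u Au def_y.
have def_y' : y = x * u^-1 by rewrite def_y conjgC conj_A_x.
by rewrite -x2 !expgS !expg0 !mulg1 {1}def_y' def_y mulgA mulgKV.
Qed.

Lemma order_an : #[a ^+ n] = 2.
Proof. by rewrite orderXdiv order_a ?dvdn_mull // mulnK. Qed.

Lemma order_outside_A y : y \in G -> y \notin A -> #[y] = 4.
Proof.
move=> yG nAy; have y2 := sqr_outside_A yG nAy.
have dvd4 : (#[y] %| 4)%N by rewrite order_dvdn (expgM y 2 2) y2 -expgM mulnC a2n.
have ndvd2 : ~~ (#[y] %| 2)%N by rewrite order_dvdn y2 -order_eq1 order_an.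
move: dvd4 ndvd2; rewrite dvdn_divisors // (_ : divisors 4 = [:: 1; 2; 4]%N) //.
by rewrite !inE => /or3P[] /eqP->.
Qed.

(* Anything centralised by an element outside A is inverted by it, hence has
   exponent 2. *)
Lemma card_centralised_sub_A K y :
  K \subset A -> y \in G -> y \notin A -> K \subset 'C[y] -> (#|K| <= 2)%N.
Proof.
move=> sKA yG nAy cKy; rewrite -(exponent_cyclic (cyclicS sKA (cycle_cyclic a))).
apply: dvdn_leq => //; apply/exponentP=> z Kz.
have: z ^ y = z by apply/conjg_fixP/commgP/cent1P/(subsetP cKy).
rewrite (conj_outside_A (subsetP sKA z Kz) yG nAy) => zVz.
by rewrite !expgS expg0 mulg1 -{1}zVz mulVg.
Qed.

Lemma cycle_outside_A_eq w v : w \in G -> w \notin A -> v \in G -> v \notin A ->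
  w \in <[v]> -> <[w]> = <[v]>.
Proof.
move=> wG nAw vG nAv vw; apply/eqP; rewrite eqEcard cycle_subG vw -!orderE.
by rewrite !order_outside_A.
Qed.

Lemma abelian_Dic1 : n = 1%N -> abelian G.
Proof.
move=> n1; apply: abelianS (cycle_abelian x).
rewrite defG gen_subG subUset !sub1set cycle_id andbT.
by rewrite -(expg1 a) -n1 -x2 mem_cycle.
Qed.

Section NonAbelian.
Hypothesis n_gt1 : (1 < n)%N.

Lemma cent_A : 'C_G(A) = A.
Proof.
apply/eqP; rewrite eqEsubset subsetI sAG; apply/and3P; split=> //.
  apply/subsetP=> y /setIP[yG cAy]; apply: contraLR n_gt1 => nAy.
  have sA_Cy : A \subset 'C[y] by rewrite sub_cent1.
  by have := card_centralised_sub_A (subxx A) yG nAy sA_Cy; rewrite card_A; lia.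
exact: cycle_abelian.
Qed.

Lemma center_Dic : 'Z(G) = <[a ^+ n]>.
Proof.
have sZA : 'Z(G) \subset A by rewrite -cent_A setIS // centS ?sAG.
have Z_an : a ^+ n \in 'Z(G).
  rewrite inE groupX ?aG //= -sub_cent1 defG gen_subG subUset !sub1set.
  apply/andP; split; apply/cent1P; last rewrite -x2; exact/commuteX/commute_refl.
apply/eqP; rewrite eq_sym eqEcard cycle_subG Z_an -orderE order_an /=.
apply: card_centralised_sub_A sZA xG x_notin_A _.
by rewrite sub_cent1 (subsetP _ x xG) // centsC subsetIr.
Qed.

Lemma card_center_Dic : #|'Z(G)| = 2.
Proof. by rewrite center_Dic -orderE order_an. Qed.

Lemma mCD_not_sub_A H : H \subset G -> ~~ (H \subset A) -> (mCD G H <= 8 * n)%N.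
Proof.
move=> sHG /subsetPn[w Hw nAw]; have wG := subsetP sHG w Hw.
have le_CA : (#|'C_G(H) :&: A| <= 2)%N.
  apply: card_centralised_sub_A (subsetIr _ _) wG nAw _.
  rewrite sub_cent1; apply/centP=> z /setIP[/setIP[_ /centP cHz] _].
  exact/commute_sym/cHz.
have le_C : (#|'C_G(H)| <= 4)%N.
  apply: leq_trans (leq_card_indexI A (subsetIl G 'C(H))) _.
  by rewrite index_A (leq_mul (leqnn 2) le_CA).
case/eqVproper: sHG => [eqHG | ltHG].
  by rewrite /mCD eqHG card_center_Dic cardG; lia.
have := double_card_proper ltHG; rewrite cardG /mCD => le_H.
by apply: leq_trans (leq_mul (leqnn _) le_C) _; lia.
Qed.

Lemma mCD_sub_A H : H \subset A ->
  (mCD G H <= 8 * n)%N \/ (mCD G H <= #|H| * (2 * n))%N.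
Proof.
move=> sHA.
have [sCA | /subsetPn[w /setIP[wG cHw] nAw]] := boolP ('C_G(H) \subset A).
  by right; rewrite /mCD leq_mul2l -card_A subset_leq_card ?orbT.
left; have le_H : (#|H| <= 2)%N.
  by apply: card_centralised_sub_A sHA wG nAw _; rewrite sub_cent1.
have le_C : (#|'C_G(H)| <= 4 * n)%N by rewrite -cardG subset_leq_card ?subsetIl.
by apply: leq_trans (leq_mul le_H le_C) _; lia.
Qed.

Lemma mCD_Dic_cases H : H \subset G ->
  (mCD G H <= 8 * n)%N \/ H \subset A /\ (mCD G H <= #|H| * (2 * n))%N.
Proof.
move=> sHG; have [sHA | nsHA] := boolP (H \subset A).
  by case: (mCD_sub_A sHA); [left | right].
by left; apply: mCD_not_sub_A.
Qed.

Lemma mCD_A : mCD G A = (2 * n * (2 * n))%N.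
Proof. by rewrite /mCD cent_A card_A. Qed.

Lemma mstar_Dic : mstar G = (2 * n * (2 * n))%N.
Proof.
apply: (mstar_attained sAG mCD_A) => H sHG.
case: (mCD_Dic_cases sHG) => [le_8n | [sHA le_m]].
  by apply: leq_trans le_8n _; nia.
by apply: leq_trans le_m _; rewrite leq_mul2r -card_A subset_leq_card ?orbT.
Qed.

End NonAbelian.

Lemma CDlattice_Dic_gt2 : (2 < n)%N -> CDlattice G = [set A].
Proof.
move=> n_gt2; have n_gt1 := ltnW n_gt2.
apply/setP=> H; rewrite !inE mstar_Dic //.
apply/andP/eqP=> [[sHG /eqP mH] | ->]; last by rewrite sAG mCD_A.
case: (mCD_Dic_cases n_gt1 sHG) => [| [sHA]]; rewrite mH; first nia.
rewrite leq_pmul2r ?muln_gt0 // => le_H.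
by apply/val_inj/eqP; rewrite eqEcard sHA card_A.
Qed.

Section Dic8.
Hypothesis n_eq2 : n = 2.

Let n_gt1 : (1 < n)%N. Proof. by rewrite n_eq2. Qed.
Let card_Z : #|'Z(G)| = 2 := card_center_Dic n_gt1.
Let mstar16 : mstar G = 16. Proof. by rewrite mstar_Dic // n_eq2. Qed.

Local Notation mid := (CDlattice G :\: [set 'Z(G)%G; G]).

Lemma interval_center_cases H : 'Z(G) \subset H -> H \subset G ->
  [\/ H = 'Z(G)%G, H = G | #|H| = 4].
Proof.
move=> sZH sHG; have dvd2 : (2 %| #|H|)%N by rewrite -card_Z cardSg.
have := cardSg sHG; rewrite cardG n_eq2.
rewrite dvdn_divisors // (_ : divisors 8 = [:: 1; 2; 4; 8]%N) // !inE.
case/or4P=> /eqP cardH; rewrite cardH // in dvd2.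
- by constructor 1; apply/val_inj/eqP; rewrite eq_sym eqEcard sZH card_Z cardH.
- by constructor 3.
by constructor 2; apply/val_inj/eqP; rewrite eqEcard sHG cardG cardH n_eq2.
Qed.

Lemma mCD_interval_center H : 'Z(G) \subset H -> H \subset G -> mCD G H = 16.
Proof.
move=> sZH sHG; apply/eqP; rewrite eqn_leq -{1}mstar16 leq_mCD_mstar //=.
case: (interval_center_cases sZH sHG) => [-> | -> | cardH].
- rewrite /mCD (setIidPl _) ?card_Z ?cardG ?n_eq2 //.
  by rewrite centsC subsetIr.
- by rewrite /mCD card_Z cardG n_eq2.
have abH : abelian H by rewrite (card_p2group_abelian (p := 2)) ?cardH.
have sHC : H \subset 'C_G(H) by rewrite subsetI sHG.
rewrite /mCD cardH; apply: (@leq_mul 4 4) => //.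
by rewrite -cardH subset_leq_card.
Qed.

Lemma CDlattice_Dic8 :
  CDlattice G = [set H : {group gT} | ('Z(G) \subset H) && (H \subset G)].
Proof.
apply/setP=> H; rewrite [RHS]inE; apply/idP/andP=> [CD_H | [sZH sHG]].
  by rewrite center_sub_CDlattice //; move: CD_H; rewrite inE => /andP[].
by rewrite inE sHG mCD_interval_center // mstar16.
Qed.

Lemma card_mid H : H \in mid -> #|H| = 4.
Proof.
rewrite CDlattice_Dic8 !inE negb_or => /andP[/andP[nZH nGH] /andP[sZH sHG]].
by case: (interval_center_cases sZH sHG) => // eqH; rewrite eqH eqxx in nZH nGH.
Qed.

Lemma mem_mid H : 'Z(G) \subset H -> H \subset G -> #|H| = 4 -> H \in mid.
Proof.
move=> sZH sHG cardH; rewrite CDlattice_Dic8 !inE sZH sHG negb_or.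
apply/andP; split=> //; apply/andP; split; apply/eqP=> eqH; move: cardH;
  by rewrite eqH ?card_Z ?cardG ?n_eq2.
Qed.

Lemma center_sub_cycle_outside_A w : w \in G -> w \notin A -> 'Z(G) \subset <[w]>.
Proof.
move=> wG nAw.
by rewrite center_Dic // cycle_subG -(sqr_outside_A wG nAw) mem_cycle.
Qed.

Lemma cycle_outside_A_Dic8 w : w \in G -> w \notin A ->
  <[w]> = <[x]> \/ <[w]> = <[a * x]>.
Proof.
move=> wG nAw; have [x_w | ax_w] : w \in <[x]> \/ w \in <[a * x]>.
  case/rcosetP: (rcoset_outside_A wG nAw) => u /cyclePmin[i].
  rewrite order_a n_eq2; case: i => [|[|[|[|//]]]] _ -> ->.
  - by left; rewrite mul1g cycle_id.
  - by right; rewrite expg1 cycle_id.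
  - by left; rewrite -n_eq2 -x2 -expgSr mem_cycle.
  right; rewrite expgSr -mulgA -n_eq2 -(sqr_outside_A axG ax_notin_A).
  by rewrite -expgSr mem_cycle.
- by left; apply: cycle_outside_A_eq wG nAw xG x_notin_A x_w.
by right; apply: cycle_outside_A_eq wG nAw axG ax_notin_A ax_w.
Qed.

Lemma mid_Dic8 : mid = [set A; <[x]>%G; <[a * x]>%G].
Proof.
apply/setP=> H; apply/idP/idP=> [midH | ].
  have cardH := card_mid midH.
  have sHG : H \subset G.
    by move: midH; rewrite CDlattice_Dic8 !inE => /andP[_ /andP[]].
  rewrite !inE; have [sHA | /subsetPn[w Hw nAw]] := boolP (H \subset A).
    by rewrite -val_eqE /= eqEcard sHA card_A cardH n_eq2.
  have wG := subsetP sHG w Hw.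
  have defH : H :=: <[w]>.
    apply/eqP; rewrite eq_sym eqEcard cycle_subG Hw -orderE.
    by rewrite order_outside_A ?cardH.
  rewrite -!val_eqE /= defH.
  by case: (cycle_outside_A_Dic8 wG nAw) => ->; rewrite eqxx ?orbT.
have mid_cycle w : w \in G -> w \notin A -> <[w]>%G \in mid.
  move=> wG nAw; apply: mem_mid; rewrite ?cycle_subG -?orderE ?order_outside_A //.
  exact: center_sub_cycle_outside_A.
case/setUP=> [/setU1P[-> | /set1P->] | /set1P->].
- apply: mem_mid; rewrite ?sAG ?card_A ?n_eq2 //.
  by rewrite center_Dic // cycle_subG mem_cycle.
- exact: mid_cycle xG x_notin_A.
exact: mid_cycle axG ax_notin_A.
Qed.

Lemma card_mid_Dic8 : #|mid| = 3.
Proof.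
have neq_cycle w : w \notin A -> A != <[w]>%G.
  by apply: contraNneq => ->; apply: cycle_id.
have neq_x_ax : <[x]>%G != <[a * x]>%G.
  apply/eqP=> eq_x_ax.
  have a_x : a \in <[x]>.
    by rewrite -(mulgK x a) groupM ?groupV ?cycle_id // eq_x_ax cycle_id.
  have sGx : G \subset <[x]>.
    by rewrite defG gen_subG subUset !sub1set a_x cycle_id.
  have := subset_leq_card sGx.
  by rewrite cardG n_eq2 -orderE order_outside_A ?xG ?x_notin_A.
rewrite mid_Dic8 -setUA cardsU1 cards2 neq_x_ax !inE negb_or.
by rewrite !neq_cycle ?x_notin_A ?ax_notin_A.
Qed.

Lemma quasi_antichain_Dic8 : quasi_antichain (CDlattice G) 3.
Proof.
rewrite -card_mid_Dic8; apply: quasi_antichain_interval CDlattice_Dic8 _ _.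
  by rewrite properEcard center_sub card_Z cardG n_eq2.
by move=> H K midH midK; rewrite !card_mid.
Qed.

End Dic8.
End Dicyclic.

Theorem corollary3p2 (gT : finGroupType) (G : {group gT}) (a x : gT) (n : nat) :
  (1 <= n)%N ->
  G :=: <<[set a; x]>> ->
  a ^+ (2 * n)%N = 1 -> x ^+ 2 = a ^+ n -> a ^ x = a^-1 ->
  #|G| = (4 * n)%N ->
  (n != 2%N ->
     chain0 (CDlattice G) /\
     (n = 1%N -> CDlattice G = [set G]) /\
     ((3 <= n)%N -> CDlattice G = [set <[a]>%G]))
  /\
  (n = 2%N ->
     quasi_antichain (CDlattice G) 3 /\
     CDlattice G = [set H : {group gT} | ('Z(G) \subset H) && (H \subset G)]).
Proof.
move=> n_gt0 defG a2n x2 ax cardG.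
have CD_Dic1 (n_eq1 : n = 1%N) : CDlattice G = [set G].
  exact/CDlattice_abelian/(abelian_Dic1 defG x2).
have CD_Dic_gt2 : (2 < n)%N -> CDlattice G = [set <[a]>%G].
  exact: CDlattice_Dic_gt2 n_gt0 defG a2n x2 ax cardG.
split=> [n_neq2 | n_eq2].
  split; last exact: (conj CD_Dic1 CD_Dic_gt2).
  rewrite /chain0; have [n_eq1 | n_gt2] : n = 1%N \/ (2 < n)%N by lia.
    by rewrite CD_Dic1 ?cards1.
  by rewrite CD_Dic_gt2 ?cards1.
split; first exact: quasi_antichain_Dic8 n_gt0 defG a2n x2 ax cardG n_eq2.
exact: CDlattice_Dic8 n_gt0 defG a2n x2 ax cardG n_eq2.
Qed.
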